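(* Let $\lambda>0$, $L>0$, and let $d,k,T$ be positive integers. Let $\{\{x_t(i)\}_{i\in[k]}\}_{t\in[T]}$ be any sequence of vectors $x_t(i)\in\mathbb{R}^d$ with $\|x_t(i)\|_2\le L$ for all $i\in[k]$, $t\in[T]$. Let $V_0=\lambda I$ and $V_t=\lambda I+\sum_{t'\in[t]}\sum_{i\in[k]}x_{t'}(i)x_{t'}(i)^\top$ for $t\in[T]$. Then $$\sum_{t\in[T]}\sum_{i\in[k]}\min\Big(\frac{1}{\sqrt{k}},\ \|x_t(i)\|_{V_{t-1}^{-1}}\Big)=\tilde{O}\big(\sqrt{dkT}\big)$$ and $$\sum_{t\in[T]}\sum_{i\in[k]}\mathbb{1}\Big(\|x_t(i)\|_{V_{t-1}^{-1}}>1/\sqrt{k}\Big)=\tilde{O}(dk).$$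
   Context: For a positive definite matrix $A$ and vector $x$, $\|x\|_{A}=\sqrt{x^\top A x}$. $[n]=\{1,\dots,n\}$. The notation $\tilde{O}(\cdot)$ hides logarithmic factors (here, factors logarithmic in $1+L^2kT/(d\lambda)$). *)

From HB Require Import structures.
From mathcomp Require Import all_boot all_order all_algebra.
From mathcomp Require Import reals exp.
Set Implicit Arguments. Unset Strict Implicit. Unset Printing Implicit Defensive.
Import Order.TTheory GRing.Theory Num.Theory.
Local Open Scope ring_scope.

Definition norm2 (R : realType) (d : nat) (v : 'cV[R]_d) : R :=
  Num.sqrt (\sum_(j < d) v j 0 ^+ 2).

Definition mnorm (R : realType) (d : nat) (A : 'M[R]_d) (v : 'cV[R]_d) : R :=
  Num.sqrt ((v^T *m A *m v) 0 0).

(* Gram matrix V_t = lam I + sum_{t'=1}^{t} sum_i x_{t'}(i) x_{t'}(i)^T ;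
   rounds are indexed by nat, t' ranging over 1..t, so V 0 = lam I. *)
Definition Vmat (R : realType) (d k : nat) (lam : R)
  (x : nat -> 'I_k -> 'cV[R]_d) (t : nat) : 'M[R]_d :=
  lam%:M + \sum_(1 <= t' < t.+1) \sum_(i < k) (x t' i *m (x t' i)^T).

(* The polylogarithmic slack hidden by O~ : (1 + ln(1 + L^2 k T/(d lam)))^p *)
Definition logfac (R : realType) (lam L : R) (d k T p : nat) : R :=
  (1 + ln (1 + L ^+ 2 * k%:R * T%:R / (d%:R * lam))) ^+ p.

From HB Require Import structures.
From mathcomp Require Import all_boot all_order all_algebra.
From mathcomp Require Import reals exp.
From mathcomp Require Import ring lra.
Set Implicit Arguments. Unset Strict Implicit. Unset Printing Implicit Defensive.
Import Order.TTheory GRing.Theory Num.Theory.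
Local Open Scope ring_scope.

(** Write a_t(i) for the squared norm of x_t(i) in V_{t-1}^-1 and s_t for
    sum_i a_t(i).  Adding the k rank-one terms of round t multiplies det V by
    at least 1 + s_t (matrix determinant lemma, with Cauchy-Schwarz in the
    inverse Gram matrices), so prod_t (1 + s_t) <= det V_T / lam^d.  Hadamard's
    inequality and AM-GM give det V_T <= (tr V_T / d)^d <= (lam + T k L^2 / d)^d,
    hence sum_t ln (1 + s_t) <= d ln (1 + L^2 k T / (d lam)).  Within a round,
    sum_i min (1/k, a_t(i)) <= min (1, s_t) <= 2 ln (1 + s_t).  The first bound
    follows by Cauchy-Schwarz over i and t, since min (1/sqrt k, sqrt a) =
    sqrt (min (1/k, a)); the second because each indicator is at most
    k min (1/k, a_t(i)). *)

Lemma det_1_add_mul (R : comPzRingType) n (u v : 'cV[R]_n) :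
  \det (1%:M + u *m v^T) = 1 + (v^T *m u) 0 0.
Proof.
(* Factor P = [[1, u], [-v^T, 1]] as lower-upper and as upper-lower. *)
pose P := block_mx (1%:M : 'M_n) u (- v^T) (1%:M : 'M_1).
have P_lu : P = block_mx 1%:M 0 (- v^T) 1%:M *m block_mx 1%:M u 0 (1%:M + v^T *m u).
  by rewrite mulmx_block !(mul0mx, mulmx0, mul1mx, mulmx1, addr0, add0r) mulNmx addrCA addNr addr0.
have P_ul : P = block_mx (1%:M + u *m v^T) u 0 1%:M *m block_mx 1%:M 0 (- v^T) 1%:M.
  by rewrite mulmx_block !(mul0mx, mulmx0, mul1mx, mulmx1, addr0, add0r) mulmxN addrK.
have := congr1 determinant P_lu; rewrite P_ul !det_mulmx det_lblock det_ublock.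
rewrite det_ublock !det1 !mul1r !mulr1 => ->.
by rewrite det_mx11 !mxE eqxx.
Qed.

Lemma det_add_mul (R : comUnitRingType) n (W : 'M[R]_n) (u v : 'cV[R]_n) :
  W \in unitmx -> \det (W + u *m v^T) = \det W * (1 + (v^T *m invmx W *m u) 0 0).
Proof.
move=> unitW; have -> : W + u *m v^T = W *m (1%:M + (invmx W *m u) *m v^T).
  by rewrite mulmxDr mulmx1 !mulmxA mulmxV // mul1mx.
by rewrite det_mulmx det_1_add_mul mulmxA.
Qed.

Section QuadraticForms.
Variable R : realFieldType.

Definition bform n (M : 'M[R]_n) (u v : 'cV[R]_n) : R := (u^T *m M *m v) 0 0.
Definition qform n (M : 'M[R]_n) (u : 'cV[R]_n) : R := bform M u u.

Definition psdmx n (M : 'M[R]_n) := M^T = M /\ forall z, 0 <= qform M z.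
Definition pdmx n (M : 'M[R]_n) := M^T = M /\ forall z, z != 0 -> 0 < qform M z.

Lemma bformC n (M : 'M[R]_n) u v : M^T = M -> bform M u v = bform M v u.
Proof.
move=> symM; rewrite /bform.
have -> : v^T *m M *m u = (u^T *m M *m v)^T by rewrite !trmx_mul trmxK symM mulmxA.
by rewrite [RHS]mxE.
Qed.

Lemma qform_lincomb n (M : 'M[R]_n) a b u v : M^T = M ->
  qform M (a *: u + b *: v) =
  a ^+ 2 * qform M u + 2 * a * b * bform M u v + b ^+ 2 * qform M v.
Proof.
move=> symM; rewrite /qform /bform [_^T]raddfD /= ![(_ *: _)^T]linearZ /= !mulmxDl !mulmxDr.
rewrite -!scalemxAl -!scalemxAr.
have := bformC u v symM; rewrite /bform.
set uu := u^T *m M *m u; set uv := u^T *m M *m v.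
set vu := v^T *m M *m u; set vv := v^T *m M *m v.
by rewrite !mxE => ->; ring.
Qed.

Lemma bform_sqr_le n (M : 'M[R]_n) u v : psdmx M ->
  bform M u v ^+ 2 <= qform M u * qform M v.
Proof.
case=> symM psdM; set A := qform M u; set B := bform M u v; set C := qform M v.
have Q a b : 0 <= a ^+ 2 * A + 2 * a * b * B + b ^+ 2 * C.
  by rewrite -qform_lincomb //; apply: psdM.
have A_ge0 : 0 <= A by apply: psdM.
have C_ge0 : 0 <= C by apply: psdM.
(* The test vectors C u - B v, B u - A v and u - B v settle the cases C > 0,
   A > 0 and A = C = 0 respectively. *)
have := Q C (- B); have := Q B (- A); have := Q 1 (- B).
rewrite -subr_ge0; have [C_gt0|C_le0] := ltrP 0 C.
  by rewrite -(pmulr_rge0 _ C_gt0); nra.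
have [A_gt0|A_le0] := ltrP 0 A; first by rewrite -(pmulr_rge0 _ A_gt0); nra.
nra.
Qed.

Lemma qformDM n (A B : 'M[R]_n) z : qform (A + B) z = qform A z + qform B z.
Proof. by rewrite /qform /bform mulmxDr mulmxDl mxE. Qed.

Lemma qform_sumM n I (r : seq I) (F : I -> 'M[R]_n) z :
  qform (\sum_(i <- r) F i) z = \sum_(i <- r) qform (F i) z.
Proof. by rewrite /qform /bform mulmx_sumr mulmx_suml summxE. Qed.

Lemma qform_rank1 n (y z : 'cV[R]_n) : qform (y *m y^T) z = (y^T *m z) 0 0 ^+ 2.
Proof.
rewrite /qform /bform !mulmxA -mulmxA [RHS]expr2 [(_ *m _) 0 0]mxE big_ord1.
by congr (_ * _); rewrite -[z^T *m y]trmxK trmx_mul trmxK mxE.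
Qed.

Lemma qform_mulmx n m (M : 'M[R]_n) (P : 'M[R]_(n, m)) z :
  qform M (P *m z) = qform (P^T *m M *m P) z.
Proof. by rewrite /qform /bform trmx_mul !mulmxA. Qed.

Lemma qform_scalar n a (z : 'cV[R]_n) : qform a%:M z = a * \sum_(j < n) z j 0 ^+ 2.
Proof.
rewrite /qform /bform mul_mx_scalar -scalemxAl mxE mxE.
by congr (_ * _); apply: eq_bigr => j _; rewrite mxE expr2.
Qed.

Lemma psdmx_rank1 n (y : 'cV[R]_n) : psdmx (y *m y^T).
Proof. by split=> [|z]; rewrite ?trmx_mul ?trmxK // qform_rank1 sqr_ge0. Qed.

Lemma psdmxD n (A B : 'M[R]_n) : psdmx A -> psdmx B -> psdmx (A + B).
Proof.
move=> [symA psdA] [symB psdB]; split=> [|z]; first by rewrite linearD /= symA symB.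
by rewrite qformDM addr_ge0.
Qed.

Lemma psdmx_sum n I (r : seq I) (F : I -> 'M[R]_n) :
  (forall i, psdmx (F i)) -> psdmx (\sum_(i <- r) F i).
Proof.
move=> psdF; apply: (big_ind (@psdmx n)) => //; last exact: psdmxD.
by split=> [|z]; rewrite ?trmx0 // /qform /bform mulmx0 mul0mx mxE.
Qed.

Lemma pdmx_psd n (M : 'M[R]_n) : pdmx M -> psdmx M.
Proof.
case=> symM pdM; split=> // z; have [->|/pdM/ltW //] := eqVneq z 0.
by rewrite /qform /bform mulmx0 mxE.
Qed.

Lemma pdmxDr n (W P : 'M[R]_n) : pdmx W -> psdmx P -> pdmx (W + P).
Proof.
move=> [symW pdW] [symP psdP]; split=> [|z nz]; first by rewrite linearD /= symW symP.
by rewrite qformDM ltr_wpDr ?pdW ?psdP.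
Qed.

Lemma pdmx_scalar n a : 0 < a -> pdmx (a%:M : 'M[R]_n).
Proof.
move=> a_gt0; split=> [|z nz]; first exact: tr_scalar_mx.
rewrite qform_scalar mulr_gt0 // lt_def sumr_ge0 ?andbT => [|j _]; last exact: sqr_ge0.
apply: contra nz => /eqP/psumr_eq0P z0; apply/eqP/matrixP => i j.
by rewrite ord1 mxE; apply/eqP; rewrite -sqrf_eq0 z0 // => l _; apply: sqr_ge0.
Qed.

Lemma pdmx_diag_gt0 n (V : 'M[R]_n) i : pdmx V -> 0 < V i i.
Proof.
case=> _ pdV; have := pdV (delta_mx i 0).
rewrite /qform /bform trmx_delta -rowE -colE !mxE; apply.
by apply/negP => /eqP/matrixP/(_ i 0); rewrite !mxE !eqxx => /eqP; rewrite oner_eq0.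
Qed.

Definition schur_compl n (V : 'M[R]_(1 + n)) : 'M[R]_n :=
  drsubmx V - (V 0 0)^-1 *: (dlsubmx V *m ursubmx V).

Lemma ulsubmx_mx11 n (V : 'M[R]_(1 + n)) : ulsubmx V = (V 0 0)%:M.
Proof. by apply/matrixP => i j; rewrite !ord1 !mxE eqxx mulr1n; congr (V _ _); apply: val_inj. Qed.

Lemma schur_congruence n (V : 'M[R]_(1 + n)) : V^T = V -> V 0 0 != 0 ->
  let E := block_mx 1%:M 0 (- (V 0 0)^-1 *: dlsubmx V) 1%:M in
  E *m V *m E^T = block_mx (V 0 0)%:M 0 0 (schur_compl V).
Proof.
move=> symV V00 E; have dlV : dlsubmx V = (ursubmx V)^T by rewrite trmx_ursub symV.
rewrite /E tr_block_mx !trmx1 trmx0 linearZ /= dlV trmxK -[V in _ *m V *m _]submxK.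
rewrite ulsubmx_mx11 dlV !mulmx_block !(mul1mx, mulmx1, mul0mx, mulmx0, addr0, add0r).
rewrite mul_scalar_mx mul_mx_scalar !scalerA mulrN mulfV // !scaleN1r !addNr.
by rewrite mul0mx add0r -scalemxAl scaleNr addrC /schur_compl dlV.
Qed.

Lemma pdmx_schur n (V : 'M[R]_(1 + n)) : pdmx V ->
  [/\ pdmx (schur_compl V), \det V = V 0 0 * \det (schur_compl V) &
      forall i, schur_compl V i i <= V (rshift 1 i) (rshift 1 i)].
Proof.
move=> pdV; have [symV posV] := pdV; have V00 := pdmx_diag_gt0 0 pdV.
have := schur_congruence symV (lt0r_neq0 V00).
set E := block_mx _ _ _ _ => congrV.
split.
- split=> [|z nz].
    rewrite /schur_compl linearD linearN linearZ /= trmx_mul trmx_drsub symV.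
    by rewrite trmx_ursub trmx_dlsub symV.
  have nzw : E^T *m col_mx 0 z != 0.
    rewrite tr_block_mx !trmx1 trmx0 mul_block_col !(mul0mx, mulmx0, addr0, add0r, mul1mx).
    by rewrite col_mx_eq0 negb_and nz orbT.
  have := posV _ nzw; rewrite qform_mulmx trmxK congrV /qform /bform tr_col_mx trmx0.
  by rewrite mul_row_block mul_row_col !(mul0mx, mulmx0, addr0, add0r).
- have := congr1 determinant congrV.
  by rewrite !det_mulmx det_tr /E det_lblock !det1 !mul1r mulr1 det_ublock det_scalar1.
- move=> i; rewrite /schur_compl !mxE big_ord1 -[dlsubmx V]trmxK trmx_dlsub symV mxE.
  have : 0 <= (V 0 0)^-1 * (ursubmx V 0 i * ursubmx V 0 i).
    by apply: mulr_ge0; [rewrite invr_ge0 ltW | rewrite -expr2 sqr_ge0].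
  lra.
Qed.

Lemma det_pdmx_gt0 n (V : 'M[R]_n) : pdmx V -> 0 < \det V.
Proof.
elim: n V => [|n IHn] V pdV; first by rewrite det_mx00.
have [pdS -> _] := pdmx_schur (pdV : pdmx (V : 'M_(1 + n))).
by rewrite mulr_gt0 ?pdmx_diag_gt0 ?IHn.
Qed.

Lemma pdmx_unitmx n (V : 'M[R]_n) : pdmx V -> V \in unitmx.
Proof. by move=> /det_pdmx_gt0 detV; rewrite unitmxE unitfE gt_eqF. Qed.

Lemma det_le_prod_diag n (V : 'M[R]_n) : pdmx V -> \det V <= \prod_i V i i.
Proof.
elim: n V => [|n IHn] V pdV; first by rewrite det_mx00 big_ord0.
have [pdS -> diagS] := pdmx_schur (pdV : pdmx (V : 'M_(1 + n))).
rewrite big_ord_recl; apply: ler_wpM2l; first exact/ltW/pdmx_diag_gt0.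
apply: le_trans (IHn _ pdS) _; apply: ler_prod => i _.
rewrite ltW ?pdmx_diag_gt0 //=.
by have -> : lift ord0 i = rshift 1 i by apply: val_inj.
Qed.

Lemma det_le_trace_pow n (V : 'M[R]_n) : pdmx V -> \det V <= (\tr V / n%:R) ^+ n.
Proof.
move=> pdV; apply: le_trans (det_le_prod_diag pdV) _.
have := (leif_AGM (A := predT) (fun i _ => ltW (pdmx_diag_gt0 i pdV))).1.
by rewrite card_ord.
Qed.

Lemma qform_invmx n (W : 'M[R]_n) z : pdmx W -> qform (invmx W) z = qform W (invmx W *m z).
Proof.
move=> pdW; have [symW _] := pdW.
by rewrite qform_mulmx trmx_inv symW -mulmxA mulmxV ?pdmx_unitmx // mulmx1.
Qed.

Lemma psdmx_invmx n (W : 'M[R]_n) : pdmx W -> psdmx (invmx W).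
Proof.
move=> pdW; have [symW psdW] := pdmx_psd pdW.
split=> [|z]; first by rewrite trmx_inv symW.
by rewrite qform_invmx //; apply: psdW.
Qed.

Lemma qform_invmx_ge0 n (W : 'M[R]_n) z : pdmx W -> 0 <= qform (invmx W) z.
Proof. by case/psdmx_invmx. Qed.

Lemma det_add_rank1 n (W : 'M[R]_n) y : pdmx W ->
  \det (W + y *m y^T) = \det W * (1 + qform (invmx W) y).
Proof. by move=> /pdmx_unitmx/det_add_mul ->. Qed.

Lemma pdmx_add_rank1_sum n (W : 'M[R]_n) I (r : seq I) (f : I -> 'cV[R]_n) :
  pdmx W -> pdmx (W + \sum_(i <- r) f i *m (f i)^T).
Proof. by move=> pdW; apply/pdmxDr/psdmx_sum => // i; apply: psdmx_rank1. Qed.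

Lemma qform_invmx_le_update n (W : 'M[R]_n) I (r : seq I) (f : I -> 'cV[R]_n) y :
  pdmx W ->
  qform (invmx W) y <=
  qform (invmx (W + \sum_(i <- r) f i *m (f i)^T)) y *
    (1 + \sum_(i <- r) qform (invmx W) (f i)).
Proof.
move=> pdW; have pdW' := pdmx_add_rank1_sum r f pdW.
set W' := W + _ in pdW' *; set S := \sum_(i <- r) _.
set a := qform (invmx W) y; set a' := qform (invmx W') y.
have a_ge0 : 0 <= a by apply: qform_invmx_ge0.
have S_ge0 : 0 <= S by apply: sumr_ge0 => i _; apply: qform_invmx_ge0.
(* With p := W^-1 y, Cauchy-Schwarz in W^-1 bounds qform W' p by a (1 + S),
   and Cauchy-Schwarz in W'^-1 bounds a^2 = (y^T W'^-1 (W' p))^2 by a' qform W' p. *)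
pose p := invmx W *m y.
have qW'p_le : qform W' p <= a * (1 + S).
  rewrite qformDM qform_sumM -qform_invmx // mulrDr mulr1 lerD2l /S mulr_sumr.
  apply: ler_sum => i _; rewrite qform_rank1 mulrC mulmxA -/(bform _ (f i) y).
  exact/bform_sqr_le/psdmx_invmx.
have a_sqr_le : a ^+ 2 <= a' * qform W' p.
  have -> : qform W' p = qform (invmx W') (W' *m p).
    by rewrite qform_invmx // mulKmx ?pdmx_unitmx.
  have -> : a = bform (invmx W') y (W' *m p).
    by rewrite /bform -mulmxA (mulmxA (invmx W')) mulVmx ?pdmx_unitmx // mul1mx mulmxA.
  exact/bform_sqr_le/psdmx_invmx.
have a'_ge0 : 0 <= a' by apply: qform_invmx_ge0.
have := le_trans a_sqr_le (ler_wpM2l a'_ge0 qW'p_le).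
rewrite expr2 mulrCA; have [->|a_neq0] := eqVneq a 0.
  by rewrite mulr_ge0 ?addr_ge0.
by rewrite ler_pM2l // lt_def a_neq0.
Qed.

Lemma det_add_rank1_sum_ge n (W : 'M[R]_n) I (r : seq I) (f : I -> 'cV[R]_n) :
  pdmx W ->
  \det W * (1 + \sum_(i <- r) qform (invmx W) (f i)) <=
  \det (W + \sum_(i <- r) f i *m (f i)^T).
Proof.
move=> pdW; elim: r => [|j r IHr]; first by rewrite !big_nil !addr0 mulr1.
rewrite !big_cons [in X in _ <= X]addrCA [in X in _ <= X]addrC.
rewrite det_add_rank1; last exact: pdmx_add_rank1_sum.
have := qform_invmx_le_update r f (f j) pdW.
set S := \sum_(i <- r) _ in IHr *; set a := qform (invmx W) (f j).
set a' := qform (invmx _) (f j) => a_le.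
have S_ge0 : 0 <= S by apply: sumr_ge0 => i _; apply: qform_invmx_ge0.
have a'_ge0 : 0 <= a' by apply: qform_invmx_ge0; apply: pdmx_add_rank1_sum.
apply: le_trans (ler_wpM2r _ IHr); last by rewrite addr_ge0.
by rewrite -mulrA ler_pM2l ?det_pdmx_gt0 //; nra.
Qed.

End QuadraticForms.

Section SumInequalities.
Variable R : rcfType.

Lemma sqr_sum_le I (r : seq I) (u : I -> R) :
  (\sum_(i <- r) u i) ^+ 2 <= (size r)%:R * \sum_(i <- r) u i ^+ 2.
Proof.
elim: r => [|j r IHr]; first by rewrite big_nil expr0n mul0r.
have [/size0nil -> | r_gt0] := posnP (size r).
  by rewrite !big_seq1 mul1r.
rewrite !big_cons /= -(addn1 (size r)) natrD.
move: IHr; set S := \sum_(i <- r) u i; set Q := \sum_(i <- r) u i ^+ 2.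
have m_gt0 : 0 < (size r)%:R :> R by rewrite ltr0n.
set m : R := (size r)%:R in m_gt0 * => IHr.
rewrite -subr_ge0 -(pmulr_rge0 _ m_gt0); have := sqr_ge0 (m * u j - S).
nra.
Qed.

Lemma sum_sqrt_le I (r : seq I) (b : I -> R) : (forall i, 0 <= b i) ->
  \sum_(i <- r) Num.sqrt (b i) <= Num.sqrt ((size r)%:R * \sum_(i <- r) b i).
Proof.
move=> b_ge0; have sum_ge0 : 0 <= \sum_(i <- r) Num.sqrt (b i).
  by apply: sumr_ge0 => i _; apply: sqrtr_ge0.
rewrite -[leLHS]ger0_norm // -sqrtr_sqr ler_sqrt; last first.
  by rewrite mulr_ge0 ?ler0n ?sumr_ge0.
apply: le_trans (sqr_sum_le _ _) _.
by under eq_bigr => i _ do rewrite sqr_sqrtr //.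
Qed.

Lemma sqrtr_min (x y : R) : Num.sqrt (Num.min x y) = Num.min (Num.sqrt x) (Num.sqrt y).
Proof.
have [xy|/ltW yx] := leP x y; first by rewrite !min_l ?ler_wsqrtr.
by rewrite !min_r ?ler_wsqrtr.
Qed.

End SumInequalities.

Section Logarithm.
Variable R : realType.

Lemma ln_prod I (r : seq I) (f : I -> R) : (forall i, 0 < f i) ->
  ln (\prod_(i <- r) f i) = \sum_(i <- r) ln (f i).
Proof.
move=> f_gt0; elim: r => [|i r IHr]; first by rewrite !big_nil ln1.
by rewrite !big_cons lnM ?IHr // posrE // prodr_gt0.
Qed.

Lemma le_2ln1D (u : R) : 0 <= u <= 1 -> u <= 2 * ln (1 + u).
Proof.
case/andP=> u_ge0 u_le1; have u1_gt0 : 0 < 1 + u by lra.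
have e : 1 - u / (1 + u) = (1 + u)^-1 by field; rewrite gt_eqF.
have ln_ge : u / (1 + u) <= ln (1 + u).
  have := @le_ln1Dx _ (- (u / (1 + u))); rewrite e lnV ?posrE // lerN2; apply.
  by rewrite ltrN2 ltr_pdivrMr // mul1r; lra.
have : u <= 2 * (u / (1 + u)) by rewrite mulrA ler_pdivlMr //; nra.
lra.
Qed.

End Logarithm.

Section RoundBounds.
Variable R : realType.

Lemma sum_min_le_2ln k (a : 'I_k -> R) : (forall i, 0 <= a i) ->
  \sum_(i < k) Num.min k%:R^-1 (a i) <= 2 * ln (1 + \sum_(i < k) a i).
Proof.
move=> a_ge0; set m := \sum_(i < k) _.
have m_ge0 : 0 <= m by apply: sumr_ge0 => i _; rewrite le_min invr_ge0 ler0n a_ge0.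
have m_le1 : m <= 1.
  apply: le_trans (_ : \sum_(i < k) k%:R^-1 <= _).
    by apply: ler_sum => i _; rewrite ge_min lexx.
  rewrite sumr_const card_ord -[_ *+ k]mulr_natr.
  have [->|k_gt0] := posnP k; first by rewrite mulr0.
  by rewrite mulVf // pnatr_eq0 -lt0n.
apply: le_trans (_ : 2 * ln (1 + m) <= _).
  by rewrite le_2ln1D // m_le1 m_ge0.
have sum_ge0 : 0 <= \sum_(i < k) a i by apply: sumr_ge0.
rewrite ler_pM2l // ler_ln ?posrE ?ltr_wpDr // lerD2l.
by apply: ler_sum => i _; rewrite ge_min lexx orbT.
Qed.

Lemma sum_min_sqrt_le k (a : 'I_k -> R) : (forall i, 0 <= a i) ->
  \sum_(i < k) Num.min (Num.sqrt k%:R)^-1 (Num.sqrt (a i)) <=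
  Num.sqrt (k%:R * (2 * ln (1 + \sum_(i < k) a i))).
Proof.
move=> a_ge0; under eq_bigr => i _ do rewrite -sqrtrV ?ler0n // -sqrtr_min.
apply: le_trans (sum_sqrt_le _ _) _ => [i|].
  by rewrite le_min invr_ge0 ler0n a_ge0.
rewrite ler_sqrt; last by rewrite mulr_ge0 ?ler0n // mulr_ge0 // ln_ge0 // lerDl sumr_ge0.
have -> : size (index_enum 'I_k) = k by rewrite [index_enum _]unlock -enumT size_enum_ord.
by rewrite ler_wpM2l ?ler0n ?sum_min_le_2ln.
Qed.

Lemma sum_indicator_le k (a : 'I_k -> R) : (0 < k)%N -> (forall i, 0 <= a i) ->
  \sum_(i < k) (nat_of_bool ((Num.sqrt k%:R)^-1 < Num.sqrt (a i)))%:R <=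
  k%:R * (2 * ln (1 + \sum_(i < k) a i)).
Proof.
move=> k_gt0 a_ge0; apply: le_trans (ler_wpM2l (ler0n _ k) (sum_min_le_2ln a_ge0)).
rewrite mulr_sumr; apply: ler_sum => i _.
case: ltrP => [|_]; last by rewrite mulr_ge0 ?ler0n // le_min invr_ge0 ler0n a_ge0.
rewrite -sqrtrV ?ler0n // => lt_sqrt.
have le_a : k%:R^-1 <= a i.
  by apply: ltW; move: lt_sqrt; apply: contraTT; rewrite -!leNgt => /ler_wsqrtr.
by rewrite min_l // mulfV // pnatr_eq0 -lt0n.
Qed.

End RoundBounds.

Lemma mxtrace_rank1 (R : realType) n (y : 'cV[R]_n) : \tr (y *m y^T) = norm2 y ^+ 2.
Proof.
rewrite mxtrace_mulC /mxtrace big_ord1 mxE /norm2 sqr_sqrtr; last first.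
  by apply: sumr_ge0 => j _; apply: sqr_ge0.
by apply: eq_bigr => j _; rewrite mxE expr2.
Qed.

Section GramMatrix.
Variables (R : realType) (lam L : R) (d k T : nat) (x : nat -> 'I_k -> 'cV[R]_d).
Hypotheses (lam_gt0 : 0 < lam) (d_gt0 : (0 < d)%N) (k_gt0 : (0 < k)%N).
Hypothesis x_bounded : forall t i, (1 <= t <= T)%N -> norm2 (x t i) <= L.

Local Notation ratio := (L ^+ 2 * k%:R * T%:R / (d%:R * lam)).

Lemma Vmat0 : Vmat lam x 0 = lam%:M.
Proof. by rewrite /Vmat big_geq // addr0. Qed.

Lemma VmatS t : Vmat lam x t.+1 = Vmat lam x t + \sum_(i < k) x t.+1 i *m (x t.+1 i)^T.
Proof. by rewrite /Vmat big_nat_recr //= addrA. Qed.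

Lemma pdmx_Vmat t : pdmx (Vmat lam x t).
Proof.
elim: t => [|t IHt]; first by rewrite Vmat0; apply: pdmx_scalar.
by rewrite VmatS; apply: pdmx_add_rank1_sum.
Qed.

Definition potential t := \sum_(i < k) qform (invmx (Vmat lam x t.-1)) (x t i).

Lemma potential_ge0 t : 0 <= potential t.
Proof. by apply: sumr_ge0 => i _; apply/qform_invmx_ge0/pdmx_Vmat. Qed.

Lemma det_Vmat_ge t :
  lam ^+ d * \prod_(1 <= s < t.+1) (1 + potential s) <= \det (Vmat lam x t).
Proof.
elim: t => [|t IHt]; first by rewrite big_geq // mulr1 Vmat0 det_scalar.
rewrite big_nat_recr //= mulrA VmatS.
apply: le_trans (det_add_rank1_sum_ge _ _ (pdmx_Vmat t)).
by apply: ler_wpM2r => //; rewrite addr_ge0 ?potential_ge0.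
Qed.

Lemma trace_Vmat_le : \tr (Vmat lam x T) <= lam * d%:R + T%:R * k%:R * L ^+ 2.
Proof.
rewrite /Vmat mxtraceD mxtrace_scalar.
rewrite -[lam *+ d]mulr_natr lerD2l raddf_sum /=.
apply: le_trans (_ : \sum_(1 <= t < T.+1) \sum_(i < k) L ^+ 2 <= _).
  rewrite big_nat [leRHS]big_nat; apply: ler_sum => t /andP[t_ge1 t_le].
  rewrite raddf_sum /=; apply: ler_sum => i _; rewrite mxtrace_rank1.
  have xL : norm2 (x t i) <= L by apply: x_bounded; rewrite t_ge1 -ltnS.
  have n_ge0 : 0 <= norm2 (x t i) by apply: sqrtr_ge0.
  by rewrite lerXn2r // nnegrE // (le_trans n_ge0 xL).
by rewrite sumr_const card_ord sumr_const_nat subn1 -mulrA !mulr_natl.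
Qed.

Lemma ratio_ge0 : 0 <= ratio.
Proof.
apply: divr_ge0; first by apply/mulr_ge0/ler0n; apply/mulr_ge0/ler0n; apply: sqr_ge0.
by apply/mulr_ge0/ltW.
Qed.

Lemma prod_potential_le : \prod_(1 <= t < T.+1) (1 + potential t) <= (1 + ratio) ^+ d.
Proof.
rewrite -(ler_pM2l (exprn_gt0 d lam_gt0)) -exprMn.
apply: le_trans (det_Vmat_ge T) _; apply: le_trans (det_le_trace_pow (pdmx_Vmat T)) _.
apply: lerXn2r; rewrite ?nnegrE.
- rewrite divr_ge0 ?ler0n //; apply: sumr_ge0 => i _.
  exact/ltW/pdmx_diag_gt0/pdmx_Vmat.
- by rewrite mulr_ge0 ?addr_ge0 ?ratio_ge0 // ltW.
rewrite ler_pdivrMr ?ltr0n //.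
have d_neq0 : d%:R != 0 :> R by rewrite pnatr_eq0 -lt0n.
have -> : lam * (1 + ratio) * d%:R = lam * d%:R + T%:R * k%:R * L ^+ 2.
  by field; rewrite d_neq0 gt_eqF.
exact: trace_Vmat_le.
Qed.

Lemma sum_ln_potential_le :
  \sum_(1 <= t < T.+1) ln (1 + potential t) <= d%:R * ln (1 + ratio).
Proof.
have pot_gt0 t : 0 < 1 + potential t by rewrite ltr_wpDr ?potential_ge0.
have ratio_gt0 : 0 < 1 + ratio by rewrite ltr_wpDr ?ratio_ge0.
rewrite -ln_prod // mulr_natl -lnXn // ler_ln ?posrE ?prodr_gt0 ?exprn_gt0 //.
exact: prod_potential_le.
Qed.

Lemma sum_min_mnorm_le :
  \sum_(1 <= t < T.+1) \sum_(i < k)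
      Num.min (Num.sqrt k%:R)^-1 (mnorm (invmx (Vmat lam x t.-1)) (x t i))
    <= 2 * Num.sqrt (d%:R * k%:R * T%:R) * (1 + ln (1 + ratio)).
Proof.
set Lam := ln (1 + ratio).
have Lam_ge0 : 0 <= Lam by rewrite ln_ge0 // lerDl ratio_ge0.
have ln1D_pot_ge0 t : 0 <= ln (1 + potential t).
  by rewrite ln_ge0 // lerDl potential_ge0.
apply: le_trans (_ : \sum_(1 <= t < T.+1) Num.sqrt (k%:R * (2 * ln (1 + potential t))) <= _).
  apply: ler_sum => t _.
  by apply: sum_min_sqrt_le => i; apply/qform_invmx_ge0/pdmx_Vmat.
apply: le_trans (sum_sqrt_le _ _) _ => [t|].
  by rewrite mulr_ge0 ?ler0n // mulr_ge0.
have -> : size (index_iota 1 T.+1) = T by rewrite size_iota subn1.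
rewrite -!mulr_sumr.
apply: le_trans (_ : Num.sqrt (d%:R * k%:R * T%:R * (2 * Lam)) <= _).
  rewrite ler_sqrt; last by rewrite !mulr_ge0 ?ler0n.
  have := sum_ln_potential_le; rewrite -/Lam.
  set S := \sum_(_ <= _ < _) _.
  rewrite -subr_ge0 => /(mulr_ge0 (mulr_ge0 (ler0n R k) (ler0n R T))).
  nra.
have sqrt_le : Num.sqrt (2 * Lam) <= 1 + Lam.
  rewrite -[leRHS]ger0_norm ?addr_ge0 // -sqrtr_sqr ler_sqrt ?sqr_ge0 //; nra.
rewrite [leLHS]sqrtrM ?mulr_ge0 ?ler0n //.
rewrite [leRHS]mulrAC [leRHS]mulrC; apply: ler_wpM2l; first exact: sqrtr_ge0.
by apply: le_trans sqrt_le _; lra.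
Qed.

Lemma sum_count_mnorm_le :
  \sum_(1 <= t < T.+1) \sum_(i < k)
      (nat_of_bool ((Num.sqrt k%:R)^-1 < mnorm (invmx (Vmat lam x t.-1)) (x t i)))%:R
    <= 2 * d%:R * k%:R * (1 + ln (1 + ratio)).
Proof.
apply: le_trans (_ : \sum_(1 <= t < T.+1) k%:R * (2 * ln (1 + potential t)) <= _).
  apply: ler_sum => t _.
  by apply: sum_indicator_le => // i; apply/qform_invmx_ge0/pdmx_Vmat.
rewrite -!mulr_sumr; have := sum_ln_potential_le.
have Lam_ge0 : 0 <= ln (1 + ratio) by rewrite ln_ge0 // lerDl ratio_ge0.
set S := \sum_(_ <= _ < _) _; set Lam := ln _.
have [d_ge0 k_ge0] : 0 <= d%:R :> R /\ 0 <= k%:R :> R by rewrite !ler0n.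
nra.
Qed.

End GramMatrix.

Theorem lemma2 :
  exists (C p : nat), forall (R : realType) (lam L : R) (d k T : nat)
    (x : nat -> 'I_k -> 'cV[R]_d),
    0 < lam -> 0 < L -> (0 < d)%N -> (0 < k)%N -> (0 < T)%N ->
    (forall t i, (1 <= t <= T)%N -> norm2 (x t i) <= L) ->
    \sum_(1 <= t < T.+1) \sum_(i < k)
        Num.min (Num.sqrt k%:R)^-1 (mnorm (invmx (Vmat lam x t.-1)) (x t i))
      <= C%:R * Num.sqrt (d%:R * k%:R * T%:R) * logfac lam L d k T p
    /\
    \sum_(1 <= t < T.+1) \sum_(i < k)
        (nat_of_bool ((Num.sqrt k%:R)^-1 < mnorm (invmx (Vmat lam x t.-1)) (x t i)))%:R
      <= C%:R * d%:R * k%:R * logfac lam L d k T p.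
Proof.
exists 2%N, 1%N => R lam L d k T x lam_gt0 _ d_gt0 k_gt0 _ x_bounded.
rewrite /logfac expr1; split.
- exact: sum_min_mnorm_le.
- exact: sum_count_mnorm_le.
Qed.
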